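(* Let $j\geq 2$ be an integer and let $T$ be a tree of order $n>10j$. If $\mu\neq 1$ is a Laplacian eigenvalue of $T$ with $m_T(\mu)=\lfloor \frac{n}{2}\rfloor - j$, then $\mu=\frac{3\pm\sqrt{5}}{2}$.
   Context: For a graph $G$, the Laplacian matrix is $L(G)=D(G)-A(G)$, with $D(G)$ the diagonal degree matrix and $A(G)$ the adjacency matrix; its eigenvalues are the Laplacian eigenvalues, and $m_G(\mu)$ denotes the multiplicity of $\mu$ as an eigenvalue of $L(G)$. *)

From mathcomp Require Import all_boot all_order all_algebra.
Set Implicit Arguments. Unset Strict Implicit. Unset Printing Implicit Defensive.
Import Order.TTheory GRing.Theory Num.Theory.
Local Open Scope ring_scope.

Definition simple_graph (n : nat) (e : rel 'I_n) : Prop :=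
  symmetric e /\ irreflexive e.

Definition connected_graph (n : nat) (e : rel 'I_n) : Prop :=
  forall x y : 'I_n, connect e x y.

Definition acyclic_graph (n : nat) (e : rel 'I_n) : Prop :=
  forall p : seq 'I_n, uniq p -> (3 <= size p)%N -> ~~ cycle e p.

Definition is_tree (n : nat) (e : rel 'I_n) : Prop :=
  [/\ simple_graph e, connected_graph e & acyclic_graph e].

Definition degree (n : nat) (e : rel 'I_n) (i : 'I_n) : nat :=
  #|[set j | e i j]|.

Definition laplacian (R : nzRingType) (n : nat) (e : rel 'I_n) : 'M[R]_n :=
  \matrix_(i, j) ((if i == j then (degree e i)%:R else 0)
                  - (if e i j then 1 else 0)).

Definition lap_mult (R : fieldType) (n : nat) (e : rel 'I_n) (mu : R) : nat :=
  mup mu (char_poly (laplacian R e)).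

(* Root the tree at r. Call a vertex a short pendant if it is a leaf, or has
   degree 2 and a leaf child, and heavy if it is neither the root nor a short
   pendant. When mu <> 1 and mu^2 - 3 mu + 1 <> 0, an eigenvector for mu that
   vanishes on the root and on every heavy vertex except one chosen heavy child
   per vertex vanishes everywhere: walking down from the root, a short pendant
   below a zero entry is zero by the eigen-equations on its at most two
   vertices, and the chosen heavy child is the only neighbour of its (zero)
   parent not yet known to be zero. As L is symmetric, the multiplicity is the
   eigenspace dimension, hence at most 1 + #(heavy vertices without heavy
   children). Each such vertex owns three non-root vertices (itself and two
   below it), so the multiplicity is at most (n + 2) / 3 < n/2 - j. *)

From mathcomp Require Import all_boot all_order all_algebra.
From mathcomp Require Import zify ring.
Set Implicit Arguments. Unset Strict Implicit. Unset Printing Implicit Defensive.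
Import Order.TTheory GRing.Theory Num.Theory.

Local Open Scope ring_scope.

Lemma char_poly_similar (F : fieldType) n (P A B : 'M[F]_n) :
  P \in unitmx -> P *m A = B *m P -> char_poly A = char_poly B.
Proof.
move=> Pu PA_BP; pose Q := map_mx polyC P.
have QA_BQ : Q *m char_poly_mx A = char_poly_mx B *m Q.
  by rewrite /char_poly_mx mulmxBr mulmxBl -!map_mxM PA_BP -scalar_mxC.
have detQ : \det Q != 0 by rewrite det_map_mx polyC_eq0 -unitfE -unitmxE.
by apply: (mulfI detQ); rewrite -det_mulmx QA_BQ det_mulmx mulrC.
Qed.

Lemma mup_char_poly_block (F : fieldType) g k (A : 'M[F]_(g + k))
    (E : 'M_(g, g + k)) (W : 'M_(k, g + k)) (B : 'M_k) (mu : F) :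
  col_mx E W \in unitmx -> E *m A = mu *: E -> W *m A = B *m W ->
  ~~ eigenvalue B mu -> mup mu (char_poly A) = g.
Proof.
move=> Pu EA WA Bmu.
have PA : col_mx E W *m A = block_mx mu%:M 0 0 B *m col_mx E W.
  by rewrite mul_block_col mul_col_mx EA WA !mul0mx addr0 add0r mul_scalar_mx.
rewrite (char_poly_similar Pu PA) /char_poly char_block_diag_mx det_ublock.
have -> : char_poly_mx (mu%:M : 'M[F]_g) = ('X - mu%:P)%:M.
  by rewrite /char_poly_mx map_scalar_mx /= raddfB.
rewrite det_scalar mupMl ?mup_XsubCX ?eqxx //.
by rewrite -/(char_poly B) -eigenvalue_root_char.
Qed.

Lemma self_orthogonal_row_eq0 (R : realFieldType) m n (E : 'M[R]_(m, n))
    (u : 'rV[R]_n) :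
  (u <= E)%MS -> u *m E^T = 0 -> u = 0.
Proof.
move=> /submxP [c ->] cE0.
have : (c *m E) *m (c *m E)^T = 0 by rewrite trmx_mul mulmxA cE0 mul0mx.
move: (c *m E) => v /(congr1 (fun M : 'M_1 => M 0 0)); rewrite !mxE => vv0.
have sq0 : \sum_k v 0 k ^+ 2 = 0.
  by rewrite -[RHS]vv0; apply: eq_bigr => k _; rewrite mxE expr2.
apply/rowP => k; rewrite mxE; apply/eqP; rewrite -sqrf_eq0; apply/eqP.
by apply: (psumr_eq0P _ sq0) => // i _; exact: sqr_ge0.
Qed.

Lemma mup_char_poly_sym (R : realFieldType) n (A : 'M[R]_n) (mu : R) :
  A^T = A -> mup mu (char_poly A) = \rank (eigenspace A mu).
Proof.
move=> A_sym.
(* Make n syntactically a sum g + k, so that A can be split into blocks. *)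
suff gen g k : n = (g + k)%N -> \rank (eigenspace A mu) = g ->
    mup mu (char_poly A) = g.
  by apply: (gen _ (n - \rank (eigenspace A mu))%N); rewrite ?subnKC ?rank_leq_col.
move=> nE; move: A A_sym; rewrite {n}nE => A A_sym rkV.
set V := eigenspace A mu.
pose E : 'M[R]_(g, g + k) := castmx (rkV, erefl) (row_base V).
have EV : (E :=: V)%MS by apply: eqmx_trans (eqmx_cast _ _) (eq_row_base _).
have rkW : \rank (kermx E^T) = k by rewrite mxrank_ker mxrank_tr EV rkV addKn.
pose W : 'M[R]_(k, g + k) := castmx (rkW, erefl) (row_base (kermx E^T)).
have WK : (W :=: kermx E^T)%MS by apply: eqmx_trans (eqmx_cast _ _) (eq_row_base _).
have EW0 (u : 'rV_(g + k)) : (u <= E)%MS -> (u <= W)%MS -> u = 0.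
  by rewrite WK => uE /sub_kermxP; exact: self_orthogonal_row_eq0.
have WE0 : W *m E^T = 0 by apply/sub_kermxP; rewrite WK.
have WA_W : (W *m A <= W)%MS.
  rewrite WK; apply/sub_kermxP; rewrite -mulmxA -{1}A_sym -trmx_mul.
  have /eigenspaceP -> : (E <= V)%MS by rewrite EV.
  by rewrite linearZ /= -scalemxAr WE0 scaler0.
pose B := W *m A *m pinvmx W.
have WAB : W *m A = B *m W by rewrite mulmxKpV.
apply: (mup_char_poly_block (E := E) (W := W) (B := B)) => //.
- have capEW : (E :&: W)%MS = 0.
    by apply/eqP/rowV0P => u; rewrite sub_capmx => /andP [/EW0 uE /uE].
  rewrite -row_free_unit /row_free -addsmxE mxrank_disjoint_sum //.
  by rewrite EV WK rkV rkW.
- by apply/eigenspaceP; rewrite EV.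
apply/eigenvalueP => -[v vB]; apply/negP; rewrite negbK.
rewrite -(mulmx_free_eq0 _ (_ : row_free W)); last by rewrite /row_free WK rkW.
apply/eqP/EW0; last exact: submxMl.
by rewrite EV; apply/eigenspaceP; rewrite -mulmxA WAB mulmxA vB scalemxAl.
Qed.

Lemma mxrank_leq_card_determining (F : fieldType) m n (K : 'M[F]_(m, n))
    (S : {set 'I_n}) :
  (forall u : 'rV_n, (u <= K)%MS -> {in S, forall s, u 0 s = 0} -> u = 0) ->
  (\rank K <= #|S|)%N.
Proof.
move=> determining; pose Q : 'M[F]_(n, #|S|) := colsub enum_val 1%:M.
have capK0 : (K :&: kermx Q)%MS = 0.
  apply/eqP/rowV0P => u; rewrite sub_capmx => /andP [uK /sub_kermxP uQ].
  apply: determining => // s sS; rewrite -(enum_rankK_in sS sS).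
  by move/rowP: uQ => /(_ (enum_rank_in sS s)); rewrite mulmx_colsub mulmx1 !mxE.
by rewrite -(mxrank_mul_ker K Q) capK0 mxrank0 addn0 rank_leq_col.
Qed.

Lemma quadratic_3_1_roots (R : rcfType) (mu : R) :
  mu ^+ 2 - 3 * mu + 1 = 0 ->
  mu = (3 + Num.sqrt 5) / 2 \/ mu = (3 - Num.sqrt 5) / 2.
Proof.
move=> mu_root; have sqrt5 : Num.sqrt 5 ^+ 2 = 5 :> R by rewrite sqr_sqrtr // ler0n.
have : (2 * mu - 3) ^+ 2 == Num.sqrt 5 ^+ 2.
  by rewrite sqrt5 -subr_eq0 -[X in _ == X](mulr0 4) -mu_root; apply/eqP; ring.
have two_neq0 : 2 != 0 :> R by rewrite pnatr_eq0.
by rewrite eqf_sqr => /orP [] /eqP <-; [left | right]; field.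
Qed.

Lemma laplacian_tr (R : nzRingType) n (e : rel 'I_n) :
  symmetric e -> (laplacian R e)^T = laplacian R e.
Proof.
by move=> e_sym; apply/matrixP => a b; rewrite !mxE e_sym eq_sym; case: eqP => // ->.
Qed.

Lemma laplacian_eigen_eq (R : comNzRingType) n (e : rel 'I_n) (mu : R)
    (x : 'rV[R]_n) :
  symmetric e -> irreflexive e -> x *m laplacian R e = mu *: x ->
  forall v, ((degree e v)%:R - mu) * x 0 v = \sum_(u | e v u) x 0 u.
Proof.
move=> e_sym e_irr /rowP xL v; have := xL v.
rewrite !mxE (bigD1 v) //= !mxE eqxx e_irr subr0.
have -> : \sum_(u | u != v) x 0 u * laplacian R e u v = - \sum_(u | e v u) x 0 u.
  rewrite -sumrN big_mkcond [RHS]big_mkcond; apply: eq_bigr => u _; rewrite mxE.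
  have [-> | _] := eqVneq u v; first by rewrite e_irr.
  by rewrite e_sym; case: (e v u); rewrite /= ?subr0 ?sub0r ?mulrN1 ?mulr0 ?oppr0.
by move=> xLv; rewrite mulrBl -xLv; ring.
Qed.

Local Close Scope ring_scope.

Lemma leq_mul_card_preimset (T T' : finType) (f : T -> T') (A : {set T'}) k :
  {in A, forall c, k <= #|[set w | f w == c]|} -> k * #|A| <= #|f @^-1: A|.
Proof.
move=> fiber_ge; rewrite mulnC -sum_nat_const.
apply: (@leq_trans (\sum_(c in A) #|[set w | f w == c]|)); first exact: leq_sum.
rewrite -sum1_card (partition_big f (mem A)) => [|w]; last by rewrite inE.
apply/eq_leq/eq_bigr => c cA; rewrite -sum1_card; apply: eq_bigl => w.
by rewrite !inE; case: (f w =P c) => [->|]; rewrite ?cA ?andbF.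
Qed.

Lemma nbr_notin n (e : rel 'I_n) v (A : {set 'I_n}) :
  #|A| < degree e v -> exists2 u, e v u & u \notin A.
Proof.
move=> Alt; have /subsetPn [u] : ~~ ([set u | e v u] \subset A).
  by apply: contraTN Alt => /subset_leq_card; rewrite -leqNgt.
by rewrite inE => evu uA; exists u.
Qed.

Section RootedTree.

Variables (n : nat) (e : rel 'I_n) (r : 'I_n).
Hypotheses (e_sym : symmetric e) (e_irr : irreflexive e)
  (e_conn : connected_graph e) (e_acyc : acyclic_graph e).

Local Notation deg := (degree e).

Fixpoint ball k : {set 'I_n} :=
  if k is k'.+1 then ball k' :|: [set v | [exists u in ball k', e u v]]
  else [set r].

Lemma last_path_in_ball p : path e r p -> last r p \in ball (size p).
Proof.
elim/last_ind: p => [|p v IHp]; first by rewrite inE.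
rewrite rcons_path last_rcons size_rcons => /andP [/IHp pr ev] /=.
by rewrite in_setU inE; apply/orP; right; apply/existsP; exists (last r p); rewrite pr.
Qed.

Lemma in_some_ball v : exists k, v \in ball k.
Proof.
by have /connectP [p pr ->] := e_conn r v; exists (size p); exact: last_path_in_ball.
Qed.

Definition depth v := ex_minn (in_some_ball v).

Lemma ball_mono k m : k <= m -> ball k \subset ball m.
Proof.
move=> /subnKC <-; elim: (m - k) => [|i IHi]; first by rewrite addn0.
by rewrite addnS (subset_trans IHi) ?subsetUl.
Qed.

Lemma in_ball v k : (v \in ball k) = (depth v <= k).
Proof.
rewrite /depth; case: ex_minnP => d vd d_min.
by apply/idP/idP => [/d_min // | /ball_mono /subsetP]; apply.
Qed.

Lemma depth_eq0 v : (depth v == 0) = (v == r).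
Proof. by rewrite -leqn0 -in_ball inE. Qed.

Lemma neq_r_depth v : (v != r) = (0 < depth v).
Proof. by rewrite lt0n depth_eq0. Qed.

Lemma depth_edge u v : e u v -> depth v <= (depth u).+1.
Proof.
move=> euv; rewrite -in_ball /= in_setU inE; apply/orP; right.
by apply/existsP; exists u; rewrite in_ball leqnn.
Qed.

Definition par v := odflt v [pick u | e u v && ((depth u).+1 == depth v)].

Lemma par_r : par r = r.
Proof.
rewrite /par; case: pickP => // u /andP [_ /eqP du].
by have /eqP := depth_eq0 r; rewrite eqxx -du.
Qed.

Lemma parP v : v != r -> e (par v) v /\ depth v = (depth (par v)).+1.
Proof.
move=> vr; have [u /andP [euv /eqP du]] : exists u, e u v && ((depth u).+1 == depth v).
  have : v \in ball (depth v) by rewrite in_ball.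
  have : 0 < depth v by rewrite -neq_r_depth.
  case dv: (depth v) => [//|k] _ /=.
  rewrite in_setU in_ball dv ltnn inE => /existsP [u /andP [uk euv]].
  by exists u; rewrite euv eqSS eqn_leq -in_ball uk -ltnS -dv depth_edge.
rewrite /par; case: pickP => [w /andP [-> /eqP ->] // | /(_ u)].
by rewrite euv du eqxx.
Qed.

Lemma depth_par v : depth (par v) <= depth v.
Proof. by have [-> | /parP [_ ->] //] := eqVneq v r; rewrite par_r. Qed.

Lemma same_depth_path h a b : a != b -> depth a = h -> depth b = h ->
  exists p, [/\ p != [::], path e a (rcons p b), uniq (a :: rcons p b)
              & all (fun x => depth x < h) p].
Proof.
elim: h a b => [|h IHh] a b ab da db.
  have /eqP ar : a == r by rewrite -depth_eq0 da.
  have /eqP br : b == r by rewrite -depth_eq0 db.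
  by rewrite ar br eqxx in ab.
have ar : a != r by rewrite neq_r_depth da.
have br : b != r by rewrite neq_r_depth db.
have [[ea pa] [eb pb]] := (parP ar, parP br).
move: pa pb; rewrite da db => -[dpa] [dpb].
have shallow y : depth y = h.+1 -> y != par a /\ y != par b.
  by move=> dy; split; apply/eqP => yE; move: dy; rewrite yE ?dpa ?dpb; lia.
have [papb | papb] := eqVneq (par a) (par b).
  exists [:: par a]; split => //=.
  - by rewrite e_sym ea papb eb.
  - rewrite !inE negb_or ab (proj1 (shallow a da)) eq_sym papb.
    by rewrite (proj2 (shallow b db)).
  - by rewrite -dpa ltnSn.
have [q [_ qpath quniq qdepth]] := IHh _ _ papb (esym dpa) (esym dpb).
exists (par a :: rcons q (par b)); split => //.
- by rewrite /= e_sym ea rcons_path qpath last_rcons eb.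
- have notin y : depth y = h.+1 -> y \notin par a :: rcons q (par b).
    move=> dy; rewrite inE mem_rcons inE; have [/negPf -> /negPf ->] := shallow y dy.
    by apply/negP => /(allP qdepth); rewrite dy ltnNge leqnSn.
  by rewrite cons_uniq rcons_uniq quniq mem_rcons inE negb_or ab !notin.
- rewrite /= -dpa ltnSn all_rcons -dpb ltnSn.
  by apply: sub_all qdepth => x /ltnW.
Qed.

Lemma par_uniq u v : e u v -> depth v = (depth u).+1 -> u = par v.
Proof.
move=> euv dv; have vr : v != r by rewrite neq_r_depth dv.
have [epv dpv] := parP vr.
have [// | upv] := eqVneq u (par v).
have dpvu : depth (par v) = depth u by apply: succn_inj; rewrite -dpv dv.
have [q [_ qpath quniq qdepth]] := same_depth_path upv erefl dpvu.
have v_notin : v \notin u :: rcons q (par v).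
  rewrite inE mem_rcons inE; apply/negP => /or3P [/eqP vu | /eqP vpv | /(allP qdepth)].
  - by move: dv; rewrite -vu; lia.
  - by move: dpv; rewrite -vpv; lia.
  - by rewrite dv ltnNge leqnSn.
have := e_acyc (p := v :: u :: rcons q (par v)).
rewrite /= rcons_path qpath last_rcons epv e_sym euv size_rcons.
by move: quniq; rewrite cons_uniq v_notin => -> /(_ isT isT).
Qed.

Lemma edge_depth_neq a b : e a b -> depth a != depth b.
Proof.
move=> eab; apply/eqP => dab.
have ab : a != b by apply: contraTneq eab => ->; rewrite e_irr.
have [q [q_nil qpath quniq _]] := same_depth_path ab erefl (esym dab).
have := e_acyc (p := a :: rcons q b).
rewrite /= rcons_path qpath last_rcons e_sym eab size_rcons.
by move: quniq; rewrite cons_uniq => ->; case: q q_nil {qpath} => // ? ? _ /(_ isT isT).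
Qed.

Definition child v u := e v u && (depth u == (depth v).+1).

Lemma child_par v u : child v u -> par u = v /\ u != r.
Proof.
move=> /andP [evu /eqP du]; split; first by rewrite -(par_uniq evu du).
by rewrite neq_r_depth du.
Qed.

Lemma par_child v : v != r -> child (par v) v.
Proof. by move=> /parP [epv dv]; rewrite /child epv dv eqxx. Qed.

Lemma nbr_child v u : e v u -> u != par v -> child v u.
Proof.
move=> evu upv; rewrite /child evu eqn_leq depth_edge //=.
case: ltngtP => // [du_lt | dvu]; last by have := edge_depth_neq evu; rewrite dvu eqxx.
have evu' : e u v by rewrite e_sym.
have dv : depth v = (depth u).+1 by apply/eqP; rewrite eqn_leq du_lt depth_edge.
by rewrite -(par_uniq evu' dv) eqxx in upv.
Qed.

Lemma child_neq v u : child v u -> v != u.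
Proof. by case/andP => evu _; apply: contraTneq evu => ->; rewrite e_irr. Qed.

Definition leaf u := deg u == 1.
Definition short_pendant u := leaf u || (deg u == 2) && [exists l, child u l && leaf l].
Definition heavy u := (u != r) && ~~ short_pendant u.
Definition heavy_set := [set u | heavy u].
Definition heavy_parent := [set v | [exists u, child v u && heavy u]].
Definition heavy_child v := odflt v [pick u | child v u && heavy u].
Definition forcing_set := r |: (heavy_set :\: heavy_child @: heavy_parent).
Definition lowest_heavy := heavy_set :\: heavy_parent.

Lemma heavy_childP v :
  v \in heavy_parent -> child v (heavy_child v) && heavy (heavy_child v).
Proof.
rewrite inE /heavy_child => /existsP [u cu]; case: pickP => [// | none].
by rewrite none in cu.
Qed.

Lemma par_heavy_child v : v \in heavy_parent -> par (heavy_child v) = v.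
Proof. by move=> /heavy_childP /andP [/child_par []]. Qed.

Lemma in_forcing_set v : heavy v -> v != heavy_child (par v) -> v \in forcing_set.
Proof.
move=> hv; apply: contraNT; rewrite !inE hv negb_or andbT negbK => /andP [_].
by case/imsetP => w wB ->; rewrite par_heavy_child.
Qed.

Section Forcing.

Local Open Scope ring_scope.

Variables (R : fieldType) (mu : R) (x : 'I_n -> R).
Hypotheses (mu_neq1 : mu != 1) (mu_nroot : mu ^+ 2 - 3 * mu + 1 != 0)
  (x_eigen : forall v, ((deg v)%:R - mu) * x v = \sum_(u | e v u) x u)
  (x_forcing : {in forcing_set, forall s, x s = 0}).

Lemma sum_nbr_leaf v u : leaf v -> e v u -> \sum_(w | e v w) x w = x u.
Proof.
rewrite /leaf /degree => /cards1P [w nbrs] evu.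
have : u \in [set w | e v w] by rewrite inE.
rewrite nbrs inE => /eqP ->.
by rewrite (eq_bigl (fun i => i \in [set w])) ?big_set1 // => i; rewrite -nbrs inE.
Qed.

Lemma sum_nbr_deg2 v u l : deg v = 2%N -> u != l -> e v u -> e v l ->
  \sum_(w | e v w) x w = x u + x l.
Proof.
rewrite /degree => dv ul evu evl; have nbrs : [set w | e v w] = [set u; l].
  apply/eqP; rewrite eq_sym eqEcard cards2 ul dv leqnn andbT.
  by apply/subsetP => w; rewrite !inE => /orP [] /eqP ->.
rewrite (eq_bigl (fun w => w \in [set u; l])) => [|w]; last by rewrite -nbrs inE.
by rewrite big_setU1 ?big_set1 ?inE.
Qed.

Lemma short_pendant_eq0 p v : child p v -> short_pendant v -> x p = 0 -> x v = 0.
Proof.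
move=> cpv sv xp; have evp : e v p by rewrite e_sym; case/andP: cpv.
case/orP: sv => [lv | /andP [/eqP dv /existsP [l /andP [cvl ll]]]].
  have /eqP := x_eigen v; rewrite (sum_nbr_leaf lv evp) (eqP lv) xp.
  by rewrite mulf_eq0 subr_eq0 eq_sym (negPf mu_neq1) => /eqP.
have elv : e l v by rewrite e_sym; case/andP: cvl.
have pl : p != l.
  by apply: contraTneq cvl => <-; rewrite /child; case/andP: cpv => _ /eqP ->; lia.
have xl_eq := x_eigen l; rewrite (sum_nbr_leaf ll elv) (eqP ll) in xl_eq.
have evl : e v l by case/andP: cvl.
have := x_eigen v; rewrite (sum_nbr_deg2 dv pl evp evl) dv xp add0r.
rewrite -xl_eq => xv_eq.
have : (mu ^+ 2 - 3 * mu + 1) * x l = 0.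
  by rewrite -[RHS](subrr (x l)) -{2}xv_eq; ring.
by move/eqP; rewrite mulf_eq0 (negPf mu_nroot) => /eqP ->; rewrite mulr0.
Qed.

Lemma forcing_eq0 v : x v = 0.
Proof.
suff forcing_depth k u : (depth u <= k)%N -> x u = 0 by exact: forcing_depth (leqnn _).
elim: k u {v} => [|k IHk] v.
  by rewrite leqn0 depth_eq0 => /eqP ->; apply: x_forcing; rewrite setU11.
rewrite leq_eqVlt ltnS => /orP [/eqP dv | /IHk //].
have vr : v != r by rewrite neq_r_depth dv.
set p := par v; have cpv : child p v := par_child vr.
have dp : depth p = k by move: dv; rewrite (proj2 (parP vr)) => -[].
have xp : x p = 0 by rewrite IHk // dp.
case sv: (short_pendant v); first exact: short_pendant_eq0 cpv sv xp.
have hv : heavy v by rewrite /heavy vr sv.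
have [vc | /(in_forcing_set hv) /x_forcing //] := eqVneq v (heavy_child p).
have epv : e p v by case/andP: cpv.
have := x_eigen p; rewrite xp mulr0 (bigD1 v) //= => /esym.
rewrite big1 ?addr0 // => u /andP [epu uv].
have [-> | upp] := eqVneq u (par p); first by rewrite IHk // -dp depth_par.
have cpu := nbr_child epu upp; have [pu ur] := child_par cpu.
case su: (short_pendant u); first exact: short_pendant_eq0 cpu su xp.
by apply/x_forcing/in_forcing_set; rewrite ?pu -?vc // /heavy ur su.
Qed.

End Forcing.

Lemma card_forcing_set : #|forcing_set| <= 1 + #|lowest_heavy|.
Proof.
rewrite cardsU1 leq_add ?leq_b1 //.
have chosen_heavy : heavy_child @: heavy_parent \subset heavy_set.
  by apply/subsetP => _ /imsetP [w /heavy_childP /andP [_ hw] ->]; rewrite inE.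
rewrite cardsDS // card_in_imset => [|w1 w2 /par_heavy_child + /par_heavy_child + h12].
  rewrite leq_subLR -(cardsID heavy_parent heavy_set) leq_add2r.
  by rewrite subset_leq_card ?subsetIr.
by rewrite h12 => -> ->.
Qed.

Definition owner w :=
  if w \in lowest_heavy then w
  else if par w \in lowest_heavy then par w else par (par w).

Lemma child_lowest_heavy c b : c \in lowest_heavy -> child c b ->
  [/\ b \notin lowest_heavy, short_pendant b & owner b = c].
Proof.
move=> cl cb; have [pb br] := child_par cb.
have sb : short_pendant b.
  case/setDP: cl => _; apply: contraNT => nsb.
  by rewrite inE; apply/existsP; exists b; rewrite cb /heavy br.
have bl : b \notin lowest_heavy by rewrite !inE /heavy sb !andbF.
by rewrite /owner (negPf bl) pb cl.
Qed.

Lemma card_owner_fiber c : c \in lowest_heavy -> 2 < #|[set w | owner w == c]|.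
Proof.
move=> cl; have /setDP [] := cl; rewrite inE => /andP [cr c_long] _.
have oc : owner c = c by rewrite /owner cl.
have deg_c : 1 < deg c.
  have : 0 < deg c.
    by rewrite card_gt0; apply/set0Pn; exists (par c); rewrite inE e_sym (parP cr).1.
  by move: c_long; rewrite /short_pendant /leaf negb_or => /andP [+ _]; lia.
have [b ecb] : exists2 b, e c b & b \notin [set par c].
  by apply: nbr_notin; rewrite cards1.
rewrite inE => bpc; have cb := nbr_child ecb bpc.
have [bl sb ob] := child_lowest_heavy cl cb.
apply/card_gt2P; case/orP: sb => [lb | /andP [_ /existsP [l /andP [cbl ll]]]].
  have deg_c3 : 2 < deg c.
    move: c_long; rewrite /short_pendant negb_or negb_and => /andP [_ /orP [|]].
      by move: deg_c; lia.
    by rewrite negb_exists => /forallP /(_ b); rewrite cb lb.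
  have [b' ecb'] : exists2 b', e c b' & b' \notin [set par c; b].
    by apply: nbr_notin; apply: leq_ltn_trans deg_c3; rewrite cards2; case: (_ != _).
  rewrite !inE negb_or => /andP [b'pc b'b]; have cb' := nbr_child ecb' b'pc.
  have [_ _ ob'] := child_lowest_heavy cl cb'.
  exists c, b, b'; rewrite !inE oc ob ob' eqxx child_neq // eq_sym b'b.
  by rewrite eq_sym child_neq.
have [pl _] := child_par cbl.
have nl : l \notin lowest_heavy by rewrite !inE /heavy /short_pendant ll !andbF.
have ol : owner l = c by rewrite /owner (negPf nl) pl (negPf bl) (child_par cb).1.
exists c, b, l; rewrite !inE oc ob ol eqxx (child_neq cb) (child_neq cbl).
split => //; split => //; apply: contraTneq cbl => ->.
by rewrite /child; case/andP: cb => _ /eqP ->; lia.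
Qed.

Lemma owner_r : owner r \notin lowest_heavy.
Proof.
have rl : r \notin lowest_heavy by rewrite !inE /heavy eqxx !andbF.
by rewrite /owner !par_r (negPf rl).
Qed.

Lemma card_lowest_heavy : 3 * #|lowest_heavy| <= n.-1.
Proof.
apply: leq_trans (leq_mul_card_preimset card_owner_fiber) _.
rewrite -[n in n.-1]card_ord -(cardsC1 r) subset_leq_card //.
apply/subsetP => w; rewrite inE => owl; rewrite !inE.
by apply: contraTneq owl => ->; exact: owner_r.
Qed.

End RootedTree.

Local Open Scope ring_scope.

Lemma tree_eigenspace_rank (R : fieldType) n (e : rel 'I_n) (mu : R) :
  is_tree e -> (0 < n)%N -> mu != 1 -> mu ^+ 2 - 3 * mu + 1 != 0 ->
  (3 * \rank (eigenspace (laplacian R e) mu) <= n + 2)%N.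
Proof.
move=> [[e_sym e_irr] e_conn e_acyc] n_gt0 mu_neq1 mu_nroot; pose r := Ordinal n_gt0.
have rk : (\rank (eigenspace (laplacian R e) mu) <= #|forcing_set r e_conn|)%N.
  apply: mxrank_leq_card_determining => u /eigenspaceP uL u_forcing.
  apply/rowP => v; rewrite mxE.
  exact: (forcing_eq0 e_sym e_irr e_acyc mu_neq1 mu_nroot
    (laplacian_eigen_eq e_sym e_irr uL) u_forcing).
have := card_forcing_set r e_sym e_conn e_acyc.
have := card_lowest_heavy r e_sym e_irr e_conn e_acyc.
lia.
Qed.

Theorem lemma4p3 (R : rcfType) (j n : nat) (e : rel 'I_n) (mu : R) :
  (2 <= j)%N -> (10 * j < n)%N -> is_tree e ->
  eigenvalue (laplacian R e) mu -> mu != 1 ->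
  lap_mult e mu = (n./2 - j)%N ->
  mu = (3 + Num.sqrt 5) / 2 \/ mu = (3 - Num.sqrt 5) / 2.
Proof.
(* The eigenvalue hypothesis is implied by the positive multiplicity. *)
move=> j_ge2 n_gt tree _ mu_neq1 mult.
have [/quadratic_3_1_roots // | mu_nroot] := eqVneq (mu ^+ 2 - 3 * mu + 1) 0.
have [[e_sym _] _ _] := tree; have n_gt0 : (0 < n)%N by lia.
have := tree_eigenspace_rank tree n_gt0 mu_neq1 mu_nroot.
by rewrite -mup_char_poly_sym ?laplacian_tr // -/(lap_mult e mu) mult; lia.
Qed.
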